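(* No randomized online algorithm for online bipartite matching in the random edge arrival model achieves a competitive ratio greater than $\frac{69}{84}$.
   Context: Online bipartite matching in the random edge arrival model: a bipartite graph $G$ with $m$ edges is fixed adversarially; its edges arrive one at a time in a uniformly random order; the algorithm knows $m$ and upon each arrival irrevocably decides whether to add the edge to its matching, which must remain a matching. The competitive ratio of an algorithm is the infimum over graphs of (expected size of its matching over the order and its coins)$/|\textsc{OPT}|$, where $\textsc{OPT}$ is a maximum matching. *)

From HB Require Import structures.
From mathcomp Require Import all_boot all_order all_algebra.
From mathcomp Require Import reals.
Set Implicit Arguments. Unset Strict Implicit. Unset Printing Implicit Defensive.
Import Order.TTheory GRing.Theory Num.Theory.
Local Open Scope ring_scope.

(* An edge (l, r) of a bipartite graph: l is a left vertex, r a right vertex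
   (vertex names are natural numbers; left and right names live in separate
   name spaces). A graph is a duplicate-free list of its edges. *)
Definition edge := (nat * nat)%type.

(* The history seen by the online algorithm: the edges arrived so far, in
   arrival order, together with the (irrevocable) decision taken on each. *)
Definition history := seq (edge * bool).

(* A randomized online algorithm, given as a behavioural strategy: knowing m
   (number of edges), the history, and the newly arrived edge, it returns the
   probability of adding the new edge to its matching. *)
Definition online_alg (R : realType) := nat -> history -> edge -> R.

Definition valid_alg (R : realType) (A : online_alg R) : Prop :=
  forall m h e, 0 <= A m h e <= 1.

(* The new edge can be added iff no previously accepted edge shares an endpoint
   with it (the matching must remain a matching; an attempt to add an infeasible
   edge is treated as a rejection). *)
Definition can_add (h : history) (e : edge) : bool :=
  all (fun fb => fb.2 ==> ((fb.1.1 != e.1) && (fb.1.2 != e.2))) h.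

Fixpoint run_value (R : realType) (A : online_alg R) (m : nat) (h : history)
    (rest : seq edge) : R :=
  match rest with
  | [::] => 0
  | e :: rest' =>
      let q := if can_add h e then A m h e else 0 in
      q * (1 + run_value A m (rcons h (e, true)) rest')
      + (1 - q) * run_value A m (rcons h (e, false)) rest'
  end.

(* Expected size of A's matching on G when the edges of G arrive in a uniformly
   random order (for uniq G, [permutations G] lists each of the m! orders once). *)
Definition expected_alg (R : realType) (A : online_alg R) (G : seq edge) : R :=
  (\sum_(s <- permutations G) run_value A (size G) [::] s)
    / (size (permutations G))%:R.

Definition matching_in (G M : seq edge) : Prop :=
  [/\ uniq M, {subset M <= G} &
      pairwise (fun e f : edge => (e.1 != f.1) && (e.2 != f.2)) M].

Definition max_matching_size (G : seq edge) (k : nat) : Prop :=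
  (exists M, matching_in G M /\ size M = k) /\
  (forall M, matching_in G M -> (size M <= k)%N).

From HB Require Import structures.
From mathcomp Require Import all_boot all_order all_algebra.
From mathcomp Require Import reals lra.
Set Implicit Arguments. Unset Strict Implicit. Unset Printing Implicit Defensive.
Import Order.TTheory GRing.Theory Num.Theory.
Local Open Scope ring_scope.

(* Yao's principle on an explicit distribution: the 36 six-edge subgraphs of
   K_{3,3} with a unique perfect matching, each with all of its 6! arrival
   orders.  An online algorithm only sees the history, so its expected gain
   summed over all these runs is, at every history, a convex combination of
   the gains after accepting and after rejecting the arriving edge; backward
   induction bounds it by the total of the best deterministic strategy, which
   exhaustive search evaluates to 84 * 6!.  On average over the 36 graphs the
   algorithm thus matches 7/3 edges, so on one of them at most 7/3 < 3 * 69/84,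
   while its maximum matching has size 3. *)

Lemma big_partition_seq (R : Type) (idx : R) (op : Monoid.com_law idx)
    (I J : eqType) (p : I -> J) (r : seq I) (s : seq J) (F : I -> R) :
  uniq s -> (forall i, i \in r -> p i \in s) ->
  \big[op/idx]_(i <- r) F i =
  \big[op/idx]_(j <- s) \big[op/idx]_(i <- r | p i == j) F i.
Proof.
move=> uniq_s p_s; rewrite (exchange_big_dep predT) //=.
apply: eq_big_seq => i ri; rewrite -big_filter.
rewrite (eq_filter (a2 := pred1 (p i))) => [|j]; last exact: eq_sym.
by rewrite filter_pred1_uniq ?p_s // big_seq1.
Qed.

Lemma sumr_const_seq (V : nmodType) (I : Type) (r : seq I) (x : V) :
  \sum_(i <- r) x = x *+ size r.
Proof. by rewrite big_const_seq count_predT iter_addr_0. Qed.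

Lemma exists_le_mean (R : realDomainType) (I : eqType) (r : seq I) (F : I -> R)
    (c : R) :
  r != [::] -> \sum_(i <- r) F i <= c *+ size r -> exists2 i, i \in r & F i <= c.
Proof.
move=> r_neq0 le_sum; have [/hasP[i ri le_Fi] | /hasPn gt_F] :=
  boolP (has (fun i => F i <= c) r); first by exists i.
suff: c *+ size r < \sum_(i <- r) F i by rewrite ltNge le_sum.
rewrite -sumr_const_seq big_seq_cond [ltRHS]big_seq_cond.
apply: ltr_sum => [|i /andP[ri _]]; last by rewrite ltNge gt_F.
by case: r r_neq0 {le_sum gt_F} => // i r _; rewrite /= mem_head.
Qed.

Lemma convex_combination_le (R : numDomainType) (q x y z : R) :
  0 <= q <= 1 -> x <= z -> y <= z -> q * x + (1 - q) * y <= z.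
Proof.
move=> /andP[q_ge0 q_le1] le_xz le_yz.
have q'_ge0 : 0 <= 1 - q by rewrite subr_ge0.
apply: le_trans (lerD (ler_wpM2l q_ge0 le_xz) (ler_wpM2l q'_ge0 le_yz)) _.
by rewrite -mulrDl addrC subrK mul1r.
Qed.

Definition arrivals_over (E : seq edge) (n : nat) (L : seq (seq edge)) : bool :=
  all (fun s => (size s == n) && all (mem E) s) L.

Definition arrivals_after (L : seq (seq edge)) (e : edge) : seq (seq edge) :=
  [seq behead s | s <- L & ohead s == Some e].

(* The number of edges accepted, summed over the arrival sequences in L, by the
   best deterministic online algorithm that knows L: sequences sharing a
   history must receive the same decision, hence the grouping by first edge. *)
Fixpoint opt_online_total (E : seq edge) (n : nat) (h : history)
    (L : seq (seq edge)) : nat :=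
  if n is n'.+1 then
    sumn [seq let L' := arrivals_after L e in
              let reject := opt_online_total E n' (rcons h (e, false)) L' in
              if can_add h e
              then maxn (size L' + opt_online_total E n' (rcons h (e, true)) L')
                        reject
              else reject
         | e <- E]
  else 0.

Lemma arrivals_over_after E n L e :
  arrivals_over E n.+1 L -> arrivals_over E n (arrivals_after L e).
Proof.
move=> /allP L_over; apply/allP => t /mapP[[|x s]]; rewrite mem_filter //=.
by move=> /andP[_ /L_over /andP[size_s /andP[_ s_E]]] ->; rewrite /= -eqSS size_s.
Qed.

Lemma big_arrivals_after (R : Type) (idx : R) (op : Monoid.com_law idx)
    L e (F : seq edge -> R) :
  \big[op/idx]_(s <- L | ohead s == Some e) F s =
  \big[op/idx]_(t <- arrivals_after L e) F (e :: t).
Proof.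
rewrite big_map big_filter.
by apply: eq_bigr => -[|x s] /eqP // [->].
Qed.

Section RunValue.

Variables (R : realType) (A : online_alg R) (m : nat).
Hypothesis A_valid : valid_alg A.

Lemma sum_run_value_cons h e (L : seq (seq edge)) :
  let q := if can_add h e then A m h e else 0 in
  \sum_(t <- L) run_value A m h (e :: t) =
    q * ((size L)%:R + \sum_(t <- L) run_value A m (rcons h (e, true)) t)
    + (1 - q) * \sum_(t <- L) run_value A m (rcons h (e, false)) t.
Proof.
by rewrite /= -[(size L)%:R]sumr_const_seq -big_split !mulr_sumr -big_split.
Qed.

Lemma sum_run_value_le_opt E n h L :
  uniq E -> arrivals_over E n L ->
  \sum_(s <- L) run_value A m h s <= (opt_online_total E n h L)%:R.
Proof.
move=> uniq_E; elim: n h L => [|n IHn] h L L_over.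
  by rewrite big_seq big1 // => s /(allP L_over) /andP[/nilP ->].
rewrite (big_partition_seq _ (p := ohead) (s := map Some E)); last first.
- move=> s /(allP L_over) /andP[].
  by case: s => //= x s _ /andP[xE _]; rewrite map_f.
- by rewrite map_inj_uniq //; apply: Some_inj.
rewrite /= sumnE natr_sum !big_map; apply: ler_sum => e _.
rewrite big_arrivals_after sum_run_value_cons.
set L' := arrivals_after L e; have L'_over : arrivals_over E n L'.
  exact: arrivals_over_after.
case: ifP => _; last by rewrite mul0r add0r subr0 mul1r IHn.
apply: convex_combination_le; first exact: A_valid.
  set accept := opt_online_total E n (rcons h (e, true)) L'.
  apply: le_trans (_ : _ <= (size L' + accept)%:R) _.
    by rewrite natrD lerD2l IHn.
  by rewrite ler_nat leq_maxl.
by apply: le_trans (IHn _ _ L'_over) _; rewrite ler_nat leq_maxr.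
Qed.

End RunValue.

Definition disjoint_edges (e f : edge) : bool := (e.1 != f.1) && (e.2 != f.2).

Fixpoint sublists {T : Type} (s : seq T) : seq (seq T) :=
  if s is x :: s' then [seq x :: t | t <- sublists s'] ++ sublists s'
  else [:: [::]].

Lemma sublists_subseq (T : eqType) (s t : seq T) : t \in sublists s -> subseq t s.
Proof.
elim: s t => [|x s IHs] t /=; first by rewrite inE => /eqP ->.
rewrite mem_cat => /orP[/mapP[t' /IHs t's ->] | /IHs ts].
  by rewrite /= eqxx.
exact: subseq_trans ts (subseq_cons s x).
Qed.

Definition complete_bipartite (n : nat) : seq edge :=
  [seq (i, j) | i <- iota 0 n, j <- iota 0 n].

Lemma mem_complete_bipartite n e : e \in complete_bipartite n -> (e.1 < n)%N.
Proof.
by case/allpairsP => -[i j] /= []; rewrite mem_iota => /andP[_ lt_in] _ ->.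
Qed.

Lemma uniq_complete_bipartite n : uniq (complete_bipartite n).
Proof. by rewrite allpairs_uniq ?iota_uniq // => -[? ?] [? ?]. Qed.

Definition perfect_matchings (n : nat) (G : seq edge) : seq (seq edge) :=
  [seq M <- sublists G | pairwise disjoint_edges M & size M == n].

Lemma size_matching_le G M n :
  matching_in G M -> (forall e, e \in G -> e.1 < n)%N -> (size M <= n)%N.
Proof.
move=> [_ MG disj_M] G_lt; rewrite -(size_map fst) -(size_iota 0 n).
apply: uniq_leq_size => [|_ /mapP[e /MG /G_lt lt_en ->]]; last by rewrite mem_iota.
rewrite uniq_pairwise pairwise_map.
by apply: sub_pairwise disj_M => e f /andP[].
Qed.

Lemma max_matching_size_perfect G M n :
  uniq G -> (forall e, e \in G -> e.1 < n)%N ->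
  M \in perfect_matchings n G -> max_matching_size G n.
Proof.
move=> uniq_G G_lt; rewrite mem_filter.
case/andP=> /andP[disj_M /eqP size_M] /sublists_subseq MG.
split=> [|M' /size_matching_le]; last exact.
exists M; split=> //; split=> //; first exact: subseq_uniq MG uniq_G.
exact: mem_subseq.
Qed.

Definition hard_graphs : seq (seq edge) :=
  [seq G <- sublists (complete_bipartite 3)
     | (size G == 6) && (size (perfect_matchings 3 G) == 1)].

Definition hard_arrivals : seq (seq edge) :=
  flatten [seq permutations G | G <- hard_graphs].

Lemma size_hard_graphs : size hard_graphs = 36.
Proof. by vm_compute. Qed.

Lemma opt_online_total_hard_arrivals :
  opt_online_total (complete_bipartite 3) 6 [::] hard_arrivals = (84 * 6`!)%N.
Proof. by apply/eqP; vm_compute. Qed.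

Lemma hard_graph_props G :
  G \in hard_graphs ->
  [/\ subseq G (complete_bipartite 3), uniq G, size G = 6 & max_matching_size G 3].
Proof.
rewrite mem_filter => /andP[/andP[/eqP size_G /eqP one_pm] /sublists_subseq GK].
have uniq_G := subseq_uniq GK (uniq_complete_bipartite 3).
split=> //.
apply: (max_matching_size_perfect (M := nth [::] (perfect_matchings 3 G) 0)).
- exact: uniq_G.
- by move=> e /(mem_subseq GK) /mem_complete_bipartite.
- by rewrite mem_nth // one_pm.
Qed.

Lemma hard_arrivals_over : arrivals_over (complete_bipartite 3) 6 hard_arrivals.
Proof.
apply/allP => s /flattenP[_ /mapP[G /hard_graph_props[GK _ size_G _] ->]].
rewrite mem_permutations => perm_sG; rewrite (perm_size perm_sG) size_G eqxx /=.
by apply/allP => e; rewrite (perm_mem perm_sG) => /(mem_subseq GK).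
Qed.

Lemma sum_expected_alg_hard_graphs (R : realType) (A : online_alg R) :
  \sum_(G <- hard_graphs) expected_alg A G * (6`!)%:R =
  \sum_(s <- hard_arrivals) run_value A 6 [::] s.
Proof.
rewrite big_flatten big_map; apply: eq_big_seq => G.
case/hard_graph_props=> _ uniq_G size_G _.
by rewrite /expected_alg size_permutations // size_G mulrVK // unitfE pnatr_eq0.
Qed.

Lemma exists_hard_graph_expected_alg_le (R : realType) (A : online_alg R) :
  valid_alg A -> exists2 G, G \in hard_graphs & expected_alg A G <= 7 / 3.
Proof.
move=> A_valid; apply: exists_le_mean; first by rewrite -size_eq0 size_hard_graphs.
have := sum_run_value_le_opt 6 A_valid [::] (uniq_complete_bipartite 3)
  hard_arrivals_over.
rewrite opt_online_total_hard_arrivals -sum_expected_alg_hard_graphs -mulr_suml.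
rewrite natrM ler_pM2r ?ltr0n ?fact_gt0 // size_hard_graphs => /le_trans; apply.
by rewrite -mulr_natr; lra.
Qed.

Theorem lemma12 (R : realType) (A : online_alg R) :
  valid_alg A ->
  forall eps : R, 0 < eps ->
  exists (G : seq edge) (k : nat),
    [/\ uniq G, (0 < k)%N, max_matching_size G k &
        expected_alg A G < (69 / 84 + eps) * k%:R].
Proof.
move=> A_valid eps eps_gt0.
have [G /hard_graph_props[_ uniq_G _ max_G] le_G] :=
  exists_hard_graph_expected_alg_le A_valid.
exists G, 3%N; split=> //; apply: le_lt_trans le_G _; lra.
Qed.
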